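(* Let $\mathcal A_1,\mathcal B_1:U_1\to V_1$ be linear maps of finite-dimensional vector spaces over a field $\mathbb F$ with $\mathcal B_1$ surjective. Let $U_2=\mathcal B_1^{-1}(\operatorname{im}\mathcal A_1)$, $V_2=\operatorname{im}\mathcal A_1$, and let $\mathcal A_2,\mathcal B_2:U_2\to V_2$ be the restrictions of $\mathcal A_1,\mathcal B_1$; similarly let $V_3=\operatorname{im}\mathcal A_2$. Let $(A_1,B_1)$ and $(A_2,B_2)$ be the matrix pairs of $(\mathcal A_1,\mathcal B_1)$ and $(\mathcal A_2,\mathcal B_2)$ in arbitrary bases, and take any regularizing decomposition of $(A_1,B_1)$. Then a regularizing decomposition of $(A_2,B_2)$ is obtained from it by deleting all summands $(J_1(0),I_1)=([0],[1])$, replacing each summand $(J_k(0),I_k)$ with $k\ge2$ by $(J_{k-1}(0),I_{k-1})$, and leaving all other summands unchanged. The number of summands $(J_1(0),I_1)$ in the decomposition of $(A_1,B_1)$ equals $\dim V_1-2\dim V_2+\dim V_3$.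
   Context: $J_k(0)$ denotes the $k\times k$ nilpotent Jordan block with ones directly below the diagonal. $L_k$ and $R_k$ are the $(k-1)\times k$ matrices obtained from $I_k$ by deleting its last row, respectively its first row. Direct sums of matrix pairs are blockwise. Two matrix pairs $(A,B)$, $(A',B')$ are equivalent if $SA=A'R$, $SB=B'R$ for nonsingular $S,R$. A regularizing decomposition of a matrix pair $(A,B)$ is a direct sum $(I_r,D)\oplus(M_1,N_1)\oplus\dots\oplus(M_t,N_t)$ equivalent to $(A,B)$, in which $D$ is $r\times r$ nonsingular and each $(M_i,N_i)$ is one of $(I_k,J_k(0))$, $(J_k(0),I_k)$, $(L_k,R_k)$, $(L_k^T,R_k^T)$, $k\ge1$. *)

From HB Require Import structures.
From mathcomp Require Import all_boot all_order all_algebra.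
Set Implicit Arguments. Unset Strict Implicit. Unset Printing Implicit Defensive.
Import Order.TTheory GRing.Theory Num.Theory.
Local Open Scope ring_scope.

(* Matrices act on COLUMN vectors: A : 'M_(m,n) is the map x |-> A *m x
   from 'cV_n to 'cV_m. *)

Record mxpair (F : fieldType) := MxPair {
  pr_m : nat; pr_n : nat;
  pr_A : 'M[F]_(pr_m, pr_n); pr_B : 'M[F]_(pr_m, pr_n) }.

Definition pair_equiv (F : fieldType) (p q : mxpair F) : Prop :=
  exists (em : pr_m p = pr_m q) (en : pr_n p = pr_n q),
  exists (S : 'M[F]_(pr_m q)) (R : 'M[F]_(pr_n q)),
    [/\ S \in unitmx, R \in unitmx,
        S *m castmx (em, en) (pr_A p) = pr_A q *m R &
        S *m castmx (em, en) (pr_B p) = pr_B q *m R].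

Definition dsum (F : fieldType) (p q : mxpair F) : mxpair F :=
  MxPair (block_mx (pr_A p) 0 0 (pr_A q)) (block_mx (pr_B p) 0 0 (pr_B q)).

Definition Jmx (F : fieldType) (k : nat) : 'M[F]_k :=
  \matrix_(i < k, j < k) ((i == j.+1 :> nat)%:R).
Definition Lmx (F : fieldType) (k : nat) : 'M[F]_(k.-1, k) :=
  \matrix_(i < k.-1, j < k) ((i == j :> nat)%:R).
Definition Rmx (F : fieldType) (k : nat) : 'M[F]_(k.-1, k) :=
  \matrix_(i < k.-1, j < k) ((j == i.+1 :> nat)%:R).

Inductive blk :=
  | BIJ of nat
  | BJI of nat
  | BLR of nat
  | BLRT of nat.

Definition blk_size (b : blk) : nat :=
  match b with BIJ k | BJI k | BLR k | BLRT k => k end.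

Definition blk_pair (F : fieldType) (b : blk) : mxpair F :=
  match b with
  | BIJ k => MxPair (1%:M : 'M[F]_k) (Jmx F k)
  | BJI k => MxPair (Jmx F k) (1%:M : 'M[F]_k)
  | BLR k => MxPair (Lmx F k) (Rmx F k)
  | BLRT k => MxPair (Lmx F k)^T (Rmx F k)^T
  end.

Definition regpair (F : fieldType) (r : nat) (D : 'M[F]_r) (s : seq blk) : mxpair F :=
  foldl (@dsum F) (MxPair (1%:M : 'M[F]_r) D) (map (@blk_pair F) s).

Definition reg_decomp (F : fieldType) (p : mxpair F) (r : nat) (D : 'M[F]_r)
    (s : seq blk) : Prop :=
  [/\ D \in unitmx, all (fun b => 0 < blk_size b)%N s & pair_equiv p (regpair D s)].

Definition shift_blk (b : blk) : seq blk :=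
  match b with
  | BJI k => if (k <= 1)%N then [::] else [:: BJI k.-1]
  | _ => [:: b]
  end.
Definition shift_blks (s : seq blk) : seq blk := flatten (map shift_blk s).

Definition is_J1I1 (b : blk) : bool :=
  match b with BJI 1 => true | _ => false end.

(* Restricting a pair (A, B) to the pair of maps U2 = B^-1(im A) -> V2 = im A is
   compatible with equivalence of pairs and with direct sums, so it can be
   computed summand by summand on a regularizing decomposition.  A summand whose
   first matrix has a right inverse ((I_r,D), (I_k,J_k(0)), (L_k,R_k)) is its own
   restriction; (J_k(0),I_k) restricts to (J_(k-1)(0),I_(k-1)) through the basis
   R_k^T of U2 = V2 = im J_k(0), which is empty for k = 1; and (L_k^T,R_k^T)
   cannot occur because its second matrix is not onto.  The count then compares
   row numbers: dim V1, dim V2 = rank A1 and dim V3 = rank A2 are the numbers of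
   rows of the decompositions of (A1,B1), of its restriction and of the
   restriction of that. *)

From Stdlib Require Import Setoid.
From HB Require Import structures.
From mathcomp Require Import all_boot all_order all_algebra.
From mathcomp Require Import zify.
Import GRing.Theory Num.Theory.
Local Open Scope ring_scope.
Set Implicit Arguments. Unset Strict Implicit.

Section Restriction.
Variable F : fieldType.

Definition in_image m n (A : 'M[F]_(m, n)) (v : 'cV[F]_m) : Prop :=
  exists z, v = A *m z.

Definition mx_onto m n (B : 'M[F]_(m, n)) : Prop := forall v, in_image B v.

Lemma in_image0 m n (v : 'cV[F]_m) : in_image (0 : 'M_(m, n)) v <-> v = 0.
Proof.
split=> [[z ->]|->]; first by rewrite mul0mx.
by exists 0; rewrite mul0mx.
Qed.

Lemma in_image_block m n m' n' (A : 'M[F]_(m, n)) (A' : 'M[F]_(m', n'))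
    (v : 'cV[F]_m) (v' : 'cV[F]_m') :
  in_image (block_mx A 0 0 A') (col_mx v v') <-> in_image A v /\ in_image A' v'.
Proof.
split=> [[z]|[[z ->] [z' ->]]].
  rewrite -[z]vsubmxK mul_block_col !mul0mx addr0 add0r => /eq_col_mx[-> ->].
  by split; eexists.
by exists (col_mx z z'); rewrite mul_block_col !mul0mx addr0 add0r.
Qed.

Lemma in_image_col_mx0 n n' d (P : 'M[F]_(n, d)) (x : 'cV[F]_n) (x' : 'cV[F]_n') :
  in_image (col_mx P 0) (col_mx x x') <-> in_image P x /\ x' = 0.
Proof.
split=> [[y]|[[y ->] ->]]; last by exists y; rewrite mul_col_mx mul0mx.
by rewrite mul_col_mx mul0mx => /eq_col_mx[-> ->]; split; first exists y.
Qed.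

Lemma in_image_factor m n e (M : 'M[F]_(m, n)) (Q : 'M[F]_(m, e)) :
  (forall z, in_image Q (M *m z)) -> exists T, M = Q *m T.
Proof.
move=> MQ; have [y Hy] := fin_all_exists (fun j : 'I_n => MQ (delta_mx j 0)).
exists (\matrix_(i, j) y j i 0); apply/matrixP => i j.
have := congr1 (fun v : 'cV[F]_m => v i 0) (Hy j); rewrite -colE mxE => ->.
have -> : y j = (\matrix_(i, j) y j i 0) *m delta_mx j 0.
  by rewrite -colE; apply/colP => k; rewrite !mxE.
by rewrite mulmxA -colE mxE.
Qed.

(* [(A2, B2)] is the matrix pair of the restriction of [(A, B)] to
   [B^-1(im A) -> im A] in the bases formed by the columns of [P] and [Q];
   the left inverses say that these columns are independent. *)
Definition restriction_in_bases m n e d (A B : 'M[F]_(m, n))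
    (P : 'M[F]_(n, d)) (Q : 'M[F]_(m, e)) (A2 B2 : 'M[F]_(e, d)) : Prop :=
  [/\ exists LP, LP *m P = 1%:M, exists LQ, LQ *m Q = 1%:M,
      forall x, in_image A (B *m x) <-> in_image P x,
      forall v, in_image A v <-> in_image Q v
    & A *m P = Q *m A2 /\ B *m P = Q *m B2].

Definition restricts_to m n e d (A B : 'M[F]_(m, n)) (A2 B2 : 'M[F]_(e, d)) :=
  exists P Q, restriction_in_bases A B P Q A2 B2.

Lemma restricts_to_self m n (A B : 'M[F]_(m, n)) (X : 'M[F]_(n, m)) :
  A *m X = 1%:M -> restricts_to A B A B.
Proof.
move=> AX; have onto_A v : in_image A v by exists (X *m v); rewrite mulmxA AX mul1mx.
have in_image1 w : in_image 1%:M w by exists w; rewrite mul1mx.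
by exists 1%:M, 1%:M; split; rewrite ?mulmx1 ?mul1mx //; exists 1%:M; rewrite mul1mx.
Qed.

Lemma restricts_to_block m n e d m' n' e' d' (A B : 'M[F]_(m, n))
    (A2 B2 : 'M[F]_(e, d)) (A' B' : 'M[F]_(m', n')) (A2' B2' : 'M[F]_(e', d')) :
  restricts_to A B A2 B2 -> restricts_to A' B' A2' B2' ->
  restricts_to (block_mx A 0 0 A') (block_mx B 0 0 B')
               (block_mx A2 0 0 A2') (block_mx B2 0 0 B2').
Proof.
move=> [P [Q [[LP hP] [LQ hQ] hU hV [hA hB]]]].
move=> [P' [Q' [[LP' hP'] [LQ' hQ'] hU' hV' [hA' hB']]]].
exists (block_mx P 0 0 P'), (block_mx Q 0 0 Q'); split.
- exists (block_mx LP 0 0 LP').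
  by rewrite mulmx_block !mulmx0 !mul0mx !addr0 !add0r hP hP' -scalar_mx_block.
- exists (block_mx LQ 0 0 LQ').
  by rewrite mulmx_block !mulmx0 !mul0mx !addr0 !add0r hQ hQ' -scalar_mx_block.
- move=> x; rewrite -[x]vsubmxK mul_block_col !mul0mx addr0 add0r.
  by rewrite !in_image_block hU hU'.
- by move=> v; rewrite -[v]vsubmxK !in_image_block hV hV'.
- by rewrite !mulmx_block !mulmx0 !mul0mx !addr0 !add0r hA hA' hB hB'.
Qed.

Lemma restricts_to_block_ker m n e d m' n' (A B : 'M[F]_(m, n))
    (A2 B2 : 'M[F]_(e, d)) (B' : 'M[F]_(m', n')) :
  restricts_to A B A2 B2 -> (forall x : 'cV_n', B' *m x = 0 -> x = 0) ->
  restricts_to (block_mx A 0 0 0) (block_mx B 0 0 B') A2 B2.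
Proof.
move=> [P [Q [[LP hP] [LQ hQ] hU hV [hA hB]]]] injB'.
exists (col_mx P 0), (col_mx Q 0); split.
- by exists (row_mx LP 0); rewrite mul_row_col mul0mx addr0.
- by exists (row_mx LQ 0); rewrite mul_row_col mul0mx addr0.
- move=> x; rewrite -[x]vsubmxK mul_block_col !mul0mx addr0 add0r.
  rewrite in_image_block in_image0 in_image_col_mx0 hU.
  by split=> -[Px x2]; split=> //; [exact: injB' | rewrite x2 mulmx0].
- by move=> v; rewrite -[v]vsubmxK in_image_block in_image0 in_image_col_mx0 hV.
- by rewrite !mul_block_col !mul_col_mx !mul0mx !mulmx0 !addr0 hA hB.
Qed.

Lemma restriction_change_of_bases m n e d e' d' (A B A' B' : 'M[F]_(m, n))
    (S : 'M[F]_m) (R : 'M[F]_n) (P : 'M[F]_(n, d)) (Q : 'M[F]_(m, e))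
    (P' : 'M[F]_(n, d')) (Q' : 'M[F]_(m, e')) A2 B2 A2' B2' :
  S *m A = A' *m R -> S *m B = B' *m R ->
  restriction_in_bases A B P Q A2 B2 -> restriction_in_bases A' B' P' Q' A2' B2' ->
  exists T T', [/\ S *m Q = Q' *m T, R *m P = P' *m T',
                   T *m A2 = A2' *m T' & T *m B2 = B2' *m T'].
Proof.
move=> hSA hSB [_ _ hU hV [hA hB]] [_ [LQ' hQ'] hU' hV' [hA' hB']].
have [T hT] : exists T, S *m Q = Q' *m T.
  apply: in_image_factor => y; have [z hz] : in_image A (Q *m y) by apply/hV; exists y.
  by apply/hV'; exists (R *m z); rewrite -mulmxA hz !mulmxA hSA.
have [T' hT'] : exists T', R *m P = P' *m T'.
  apply: in_image_factor => y; have [z hz] : in_image A (B *m (P *m y)) by apply/hU; exists y.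
  apply/hU'; exists (R *m z).
  by rewrite -mulmxA !mulmxA -hSB -!mulmxA hz mulmxA hSA -mulmxA.
have cancelQ' (M N : 'M_(e', d)) : Q' *m M = Q' *m N -> M = N.
  by move/(congr1 (mulmx LQ')); rewrite !mulmxA hQ' !mul1mx.
exists T, T'; split=> //; apply: cancelQ'.
- by rewrite !mulmxA -hT -hA' -!mulmxA -hT' -hA !mulmxA hSA.
- by rewrite !mulmxA -hT -hB' -!mulmxA -hT' -hB !mulmxA hSB.
Qed.

Lemma basis_change_inv k e e' (X : 'M[F]_k) (Q : 'M[F]_(k, e)) (Q' : 'M[F]_(k, e'))
    (L : 'M[F]_(e, k)) (T : 'M[F]_(e', e)) (U : 'M[F]_(e, e')) :
  X \in unitmx -> L *m Q = 1%:M -> X *m Q = Q' *m T -> invmx X *m Q' = Q *m U ->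
  U *m T = 1%:M.
Proof.
move=> Xu LQ hT hU.
by rewrite -[U *m T]mul1mx -LQ -!mulmxA (mulmxA Q) -hU -mulmxA -hT mulKmx // LQ.
Qed.

Lemma mulmx1_leq k l (X : 'M[F]_(k, l)) (Y : 'M[F]_(l, k)) : X *m Y = 1%:M -> (k <= l)%N.
Proof. by move=> XY; rewrite -(mxrank1 F k) -XY (leq_trans (mxrankM_maxl _ _)) ?rank_leq_col. Qed.

Lemma restricts_to_pair_equiv m n e d e' d' (A B A' B' : 'M[F]_(m, n))
    (A2 B2 : 'M[F]_(e, d)) (A2' B2' : 'M[F]_(e', d')) (S : 'M[F]_m) (R : 'M[F]_n) :
  S \in unitmx -> R \in unitmx -> S *m A = A' *m R -> S *m B = B' *m R ->
  restricts_to A B A2 B2 -> restricts_to A' B' A2' B2' ->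
  pair_equiv (MxPair A2 B2) (MxPair A2' B2').
Proof.
move=> Su Ru hSA hSB [P [Q rAB]] [P' [Q' rAB']].
have hSA' : invmx S *m A' = A *m invmx R.
  by rewrite -[A'](mulmxK Ru) -hSA !mulmxA mulVmx // mul1mx.
have hSB' : invmx S *m B' = B *m invmx R.
  by rewrite -[B'](mulmxK Ru) -hSB !mulmxA mulVmx // mul1mx.
have [T [T' [hT hT' hTA hTB]]] := restriction_change_of_bases hSA hSB rAB rAB'.
have [U [U' [hU hU' _ _]]] := restriction_change_of_bases hSA' hSB' rAB' rAB.
have [[[LP hP] [LQ hQ] _ _ _] [[LP' hP'] [LQ' hQ'] _ _ _]] := (rAB, rAB').
have Su' : invmx S \in unitmx by rewrite unitmx_inv.
have Ru' : invmx R \in unitmx by rewrite unitmx_inv.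
have UT := basis_change_inv Su hQ hT hU.
have UT' := basis_change_inv Ru hP hT' hU'.
rewrite -[S]invmxK in hT; rewrite -[R]invmxK in hT'.
have TU := basis_change_inv Su' hQ' hU hT.
have TU' := basis_change_inv Ru' hP' hU' hT'.
have /eqP ee' : e == e' by rewrite eqn_leq (mulmx1_leq UT) (mulmx1_leq TU).
have /eqP dd' : d == d' by rewrite eqn_leq (mulmx1_leq UT') (mulmx1_leq TU').
subst e' d'; exists erefl, erefl, T, T'; rewrite !castmx_id.
by split=> //; [case: (mulmx1_unit TU) | case: (mulmx1_unit TU')].
Qed.

Lemma mxrank_linv_mul m e d (L : 'M[F]_(e, m)) (Q : 'M[F]_(m, e)) (M : 'M[F]_(e, d)) :
  L *m Q = 1%:M -> \rank (Q *m M) = \rank M.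
Proof.
move=> LQ; apply/eqP; rewrite eqn_leq mxrankM_maxr /=.
by rewrite -{1}[M]mul1mx -LQ -mulmxA mxrankM_maxr.
Qed.

Lemma restricts_to_rank m n e d (A B : 'M[F]_(m, n)) (A2 B2 : 'M[F]_(e, d)) :
  restricts_to A B A2 B2 -> \rank A = e.
Proof.
move=> [P [Q [_ [LQ hQ] _ hV _]]].
have [M1 eA] : exists M, A = Q *m M by apply: in_image_factor => z; apply/hV; exists z.
have [M2 eQ] : exists M, Q = A *m M by apply: in_image_factor => y; apply/hV; exists y.
have rQ : \rank Q = e by rewrite -[Q]mulmx1 (mxrank_linv_mul _ hQ) mxrank1.
apply/eqP; rewrite eqn_leq {1}eA (leq_trans (mxrankM_maxl _ _) (rank_leq_col _)) /=.
by rewrite -{1}rQ eQ mxrankM_maxl.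
Qed.

Lemma pair_equiv_rank (p q : mxpair F) : pair_equiv p q -> \rank (pr_A p) = \rank (pr_A q).
Proof.
case: p q => m n A B [m' n' A' B'] [/= em [en [S [R [Su Ru hSA _]]]]].
subst m' n'; rewrite castmx_id in hSA.
by rewrite -(mxrank_linv_mul _ (mulVmx Su)) hSA mxrankMfree // row_free_unit.
Qed.

Lemma pair_equiv_onto (p q : mxpair F) : pair_equiv p q -> mx_onto (pr_B p) -> mx_onto (pr_B q).
Proof.
case: p q => m n A B [m' n' A' B'] [/= em [en [S [R [Su Ru _ hSB]]]]].
subst m' n'; rewrite castmx_id in hSB => ontoB v; have [x hx] := ontoB (invmx S *m v).
by exists (R *m x); rewrite mulmxA -hSB -mulmxA -hx mulmxA mulmxV // mul1mx.
Qed.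

Lemma mx_onto_block m n m' n' (B : 'M[F]_(m, n)) (B' : 'M[F]_(m', n')) :
  mx_onto (block_mx B 0 0 B') -> mx_onto B /\ mx_onto B'.
Proof.
move=> ontoB; split=> v.
- by have /in_image_block[] := ontoB (col_mx v 0).
- by have /in_image_block[] := ontoB (col_mx 0 v).
Qed.

End Restriction.

Section CanonicalBlocks.
Variable F : fieldType.

Lemma sum_nat_delta K (a : nat) (f : nat -> F) :
  \sum_(l < K) ((l : nat) == a)%:R * f l = if (a < K)%N then f a else 0.
Proof.
rewrite (eq_bigr (fun l : 'I_K => if (l : nat) == a then f l else 0)); last first.
  by move=> l _; case: eqP => _; rewrite ?mul1r ?mul0r.
by rewrite -big_mkcond /= big_ord1_eq.
Qed.

Lemma Lmx_mul_tr k : Lmx F k *m (Lmx F k)^T = 1%:M.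
Proof.
apply/matrixP => i j; rewrite !mxE.
rewrite (eq_bigr (fun l : 'I_k => ((l : nat) == i)%:R * (j == l :> nat)%:R)); last first.
  by move=> l _; rewrite !mxE eq_sym.
by rewrite (sum_nat_delta _ _ (fun l => (j == l :> nat)%:R)) (leq_trans (ltn_ord i) (leq_pred _)) eq_sym.
Qed.

Lemma Rmx_mul_tr k : Rmx F k *m (Rmx F k)^T = 1%:M.
Proof.
apply/matrixP => i j; rewrite !mxE.
rewrite (eq_bigr (fun l : 'I_k => ((l : nat) == i.+1)%:R * (l == j.+1 :> nat)%:R)); last first.
  by move=> l _; rewrite !mxE.
by rewrite (sum_nat_delta _ _ (fun l => (l == j.+1 :> nat)%:R)) -ltn_predRL ltn_ord eqSS.
Qed.

Lemma Jmx_trRmx_Lmx k : Jmx F k = (Rmx F k)^T *m Lmx F k.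
Proof.
apply/matrixP => i j; rewrite !mxE.
rewrite (eq_bigr (fun l : 'I_k.-1 => ((l : nat) == j)%:R * (i == j.+1 :> nat)%:R)); last first.
  by move=> l _; rewrite !mxE mulrC; case: eqP => [->|_]; rewrite ?mul0r.
rewrite (sum_nat_delta _ _ (fun=> (i == j.+1 :> nat)%:R)); case: ltnP => // hj; case: eqP => // ij.
by move: (ltn_ord i); rewrite ij -ltn_predRL ltnNge hj.
Qed.

Lemma Lmx_mul_trRmx k : Lmx F k *m (Rmx F k)^T = Jmx F k.-1.
Proof.
apply/matrixP => i j; rewrite !mxE.
rewrite (eq_bigr (fun l : 'I_k => ((l : nat) == i)%:R * (i == j.+1 :> nat)%:R)); last first.
  by move=> l _; rewrite !mxE; case: eqVneq => [->|_]; rewrite ?mul1r ?mul0r.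
by rewrite (sum_nat_delta _ _ (fun=> (i == j.+1 :> nat)%:R)) (leq_trans (ltn_ord i) (leq_pred _)).
Qed.

Lemma Jmx_le1 k : (k <= 1)%N -> Jmx F k = 0.
Proof.
move=> k_le1; apply/matrixP => i j; rewrite !mxE.
by have : (i < 1)%N := leq_trans (ltn_ord i) k_le1; case: (nat_of_ord i).
Qed.

Lemma restricts_to_Jmx k : restricts_to (Jmx F k) 1%:M (Jmx F k.-1) 1%:M.
Proof.
have JRL := Jmx_trRmx_Lmx k.
exists (Rmx F k)^T, (Rmx F k)^T; split; try by exists (Rmx F k); exact: Rmx_mul_tr.
- move=> x; rewrite mul1mx JRL; split=> -[z ->]; first by exists (Lmx F k *m z); rewrite mulmxA.
  by exists ((Lmx F k)^T *m z); rewrite mulmxA -(mulmxA _ (Lmx F k)) Lmx_mul_tr mulmx1.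
- move=> v; rewrite JRL; split=> -[z ->]; first by exists (Lmx F k *m z); rewrite mulmxA.
  by exists ((Lmx F k)^T *m z); rewrite mulmxA -(mulmxA _ (Lmx F k)) Lmx_mul_tr mulmx1.
- by rewrite JRL -mulmxA Lmx_mul_trRmx mulmx1 mul1mx.
Qed.

Lemma trRmx_not_onto k : (0 < k)%N -> ~ mx_onto (Rmx F k)^T.
Proof.
case: k => // k _ /(_ (delta_mx 0 0))[x /(congr1 (fun v : 'cV[F]_k.+1 => v 0 0))].
rewrite !mxE big1 => [/eqP|l _]; first by rewrite oner_eq0.
by rewrite !mxE mul0r.
Qed.

End CanonicalBlocks.

Definition is_BLRT (b : blk) : bool := if b is BLRT _ then true else false.

Definition blk_rows (b : blk) : nat :=
  match b with BLR k => k.-1 | BIJ k | BJI k | BLRT k => k end.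

Lemma shift_blks_cons b s : shift_blks (b :: s) = shift_blk b ++ shift_blks s.
Proof. by []. Qed.

Lemma shift_blks1 b : shift_blks [:: b] = shift_blk b.
Proof. exact: cats0. Qed.

Lemma shift_blks_cat s t : shift_blks (s ++ t) = shift_blks s ++ shift_blks t.
Proof. by rewrite /shift_blks map_cat flatten_cat. Qed.

Lemma has_BLRT_shift_blks s : has is_BLRT (shift_blks s) = has is_BLRT s.
Proof.
elim: s => //= b s IH; rewrite shift_blks_cons has_cat IH.
by case: b => //= k; case: ifP.
Qed.

Lemma shift_blks_pos s :
  all (fun b => 0 < blk_size b)%N s -> all (fun b => 0 < blk_size b)%N (shift_blks s).
Proof.
elim: s => //= b s IH /andP[b_pos /IH]; rewrite shift_blks_cons all_cat => ->.
case: b b_pos => //= k k_pos; rewrite ?k_pos //.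
by case: ifP => //= /negbT; rewrite -ltnNge -ltn_predRL => ->.
Qed.

Lemma count_J1I1_rows s :
  (count is_J1I1 s + 2 * sumn (map blk_rows (shift_blks s)) =
   sumn (map blk_rows s) + sumn (map blk_rows (shift_blks (shift_blks s))))%N.
Proof.
elim: s => //= b s IH.
rewrite shift_blks_cons shift_blks_cat !map_cat !sumn_cat.
by case: b => [k|[|[|[|k]]]|k|k] /=; rewrite ?shift_blks1 /=; lia.
Qed.

Section RegularizingDecomposition.
Variable F : fieldType.

Definition restricts (p q : mxpair F) := restricts_to (pr_A p) (pr_B p) (pr_A q) (pr_B q).

Lemma restricts_pair_equiv (p p2 q q2 : mxpair F) :
  restricts p p2 -> restricts q q2 -> pair_equiv p q -> pair_equiv p2 q2.
Proof.
case: p p2 q q2 => m n A B [e d A2 B2] [m' n' A' B'] [e' d' A2' B2'] /= rp rq.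
move=> [/= em [en [S [R [Su Ru hSA hSB]]]]]; subst m' n'; rewrite !castmx_id in hSA hSB.
exact: restricts_to_pair_equiv Su Ru hSA hSB rp rq.
Qed.

Lemma regpair_rcons r (D : 'M[F]_r) s b :
  regpair D (rcons s b) = dsum (regpair D s) (blk_pair F b).
Proof. by rewrite /regpair map_rcons foldl_rcons. Qed.

Lemma regpair_cat r (D : 'M[F]_r) s t :
  regpair D (s ++ t) = foldl (@dsum F) (regpair D s) (map (@blk_pair F) t).
Proof. by rewrite /regpair map_cat foldl_cat. Qed.

Lemma regpair_rows r (D : 'M[F]_r) s : pr_m (regpair D s) = (r + sumn (map blk_rows s))%N.
Proof.
elim/last_ind: s => [|s b IH]; first exact/esym/addn0.
by rewrite regpair_rcons /= IH map_rcons -cats1 sumn_cat /= addn0 addnA; case: b.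
Qed.

Lemma regpair_onto_noBLRT r (D : 'M[F]_r) s : all (fun b => 0 < blk_size b)%N s ->
  mx_onto (pr_B (regpair D s)) -> ~~ has is_BLRT s.
Proof.
elim/last_ind: s => [//|s b IH].
rewrite all_rcons has_rcons negb_or regpair_rcons.
move=> /andP[b_pos /IH{}IH] /mx_onto_block[/IH -> ontoB]; rewrite andbT.
by case: b b_pos ontoB => //= k /trRmx_not_onto not_onto /not_onto.
Qed.

Lemma restricts_regpair r (D : 'M[F]_r) s :
  ~~ has is_BLRT s -> restricts (regpair D s) (regpair D (shift_blks s)).
Proof.
elim/last_ind: s => [_|s b IH]; first exact: (restricts_to_self _ (mulmx1 1%:M)).
rewrite has_rcons negb_or => /andP[notLRT /IH{}IH].
rewrite regpair_rcons -cats1 shift_blks_cat regpair_cat shift_blks1.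
case: b notLRT => k //= _.
- exact/restricts_to_block/(restricts_to_self _ (mulmx1 1%:M)).
- case: ifP => [/Jmx_le1 -> | _] /=.
    by apply: restricts_to_block_ker => // x; rewrite mul1mx.
  exact/restricts_to_block/restricts_to_Jmx.
- exact/restricts_to_block/(restricts_to_self _ (Lmx_mul_tr F k)).
Qed.

End RegularizingDecomposition.

Lemma linv_of_rank (F : fieldType) n d (P : 'M[F]_(n, d)) :
  \rank P = d -> exists L, L *m P = 1%:M.
Proof.
move=> rP; have /row_freeP[X PX] : row_free P^T by rewrite /row_free mxrank_tr rP.
by exists X^T; rewrite -(trmxK P) -trmx_mul PX trmx1.
Qed.

Unset Implicit Arguments. Set Strict Implicit.

Theorem lemma2 (F : fieldType) (m n : nat) (A1 B1 : 'M[F]_(m, n))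
    (d2 e2 : nat) (P : 'M[F]_(n, d2)) (Q : 'M[F]_(m, e2))
    (A2 B2 : 'M[F]_(e2, d2)) (r : nat) (D : 'M[F]_r) (s : seq blk) :
  (forall v : 'cV[F]_m, exists x : 'cV[F]_n, v = B1 *m x) ->
  \rank P = d2 ->
  (forall x : 'cV[F]_n,
      (exists z : 'cV[F]_n, B1 *m x = A1 *m z) <-> (exists y : 'cV[F]_d2, x = P *m y)) ->
  \rank Q = e2 ->
  (forall v : 'cV[F]_m,
      (exists z : 'cV[F]_n, v = A1 *m z) <-> (exists y : 'cV[F]_e2, v = Q *m y)) ->
  A1 *m P = Q *m A2 -> B1 *m P = Q *m B2 ->
  reg_decomp (MxPair A1 B1) D s ->
  reg_decomp (MxPair A2 B2) D (shift_blks s) /\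
  ((count is_J1I1 s)%:Z = m%:Z - 2 * (\rank A1)%:Z + (\rank (A1 *m P))%:Z).
Proof.
move=> ontoB1 rP hU rQ hV hA hB [Du s_pos eqs].
have [LQ LQ1] := linv_of_rank rQ.
have rA1 : restricts (MxPair A1 B1) (MxPair A2 B2).
  by exists P, Q; split=> //; [exact: linv_of_rank | exists LQ].
have noLRT := regpair_onto_noBLRT s_pos (pair_equiv_onto eqs ontoB1).
have noLRT' : ~~ has is_BLRT (shift_blks s) by rewrite has_BLRT_shift_blks.
have eqs' := restricts_pair_equiv rA1 (restricts_regpair D noLRT) eqs.
split; first by split=> //; exact: shift_blks_pos.
rewrite (restricts_to_rank rA1) hA (mxrank_linv_mul _ LQ1) (pair_equiv_rank eqs').
rewrite (restricts_to_rank (restricts_regpair D noLRT')).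
have [[/= em _] [/= ee _]] := (eqs, eqs'); rewrite em ee !regpair_rows.
by have := count_J1I1_rows s; lia.
Qed.
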